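(* Let $\mathcal{X},\mathcal{Y}$ be Hilbert spaces, $F:\mathcal{D}(F)\subset\mathcal{X}\to\mathcal{Y}$ a (nonlinear) operator, $y\in\mathcal{Y}$ exact data and $y^\delta\in\mathcal{Y}$ noisy data with $\|y-y^\delta\|\le\delta$. Assume: (a) $\Theta:\mathcal{X}\to(-\infty,\infty]$ is proper, weakly lower semi-continuous and $p$-convex for some $p>1$, i.e. there is $c_0>0$ with $D_\xi\Theta(\bar x,x)\ge c_0\|x-\bar x\|^p$ for all $\bar x\in\mathcal{D}(\Theta)$, $x\in\mathcal{D}(\partial\Theta)$, $\xi\in\partial\Theta(x)$; (b) there are $\rho>0$, $x_0\in\mathcal{X}$ and $\xi_0\in\partial\Theta(x_0)$ with $B_{2\rho}(x_0)\subset\mathcal{D}(F)$, and $F(x)=y$ has a solution $x^*\in\mathcal{D}(\Theta)$ with $D_{\xi_0}\Theta(x^*,x_0)\le c_0\rho^p$; (c) $F$ is continuous and weakly closed on $\mathcal{D}(F)$; (d) there is a family of bounded linear operators $\{L(x):\mathcal{X}\to\mathcal{Y}\}_{x\in B_{2\rho}(x_0)\cap\mathcal{D}(\Theta)}$ such that $x\mapsto L(x)$ is continuous on $B_{2\rho}(x_0)\cap\mathcal{D}(\Theta)$, there is $0\le\eta<1$ with $\|F(x)-F(\bar x)-L(\bar x)(x-\bar x)\|<\eta\|F(x)-F(\bar x)\|$ for all $x,\bar x\in B_{2\rho}(x_0)\cap\mathcal{D}(\Theta)$, and there is $C_0>0$ with $\|L(x)\|\le C_0$ for all $x\in B_{2\rho}(x_0)$.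 Let $(\xi^\delta(t),x^\delta(t))$ be the solution of the initial value problem $$\frac{d\xi^\delta(t)}{dt}=-L(x^\delta(t))^*(F(x^\delta(t))-y^\delta),\quad x^\delta(t)=\nabla\Theta^*(\xi^\delta(t)),\qquad \xi^\delta(0)=\xi_0,\ x^\delta(0)=x_0,$$ for $T>0$. Then $x^\delta(T)$ and the residual $\|F(x^\delta(T))-y^\delta\|$ are continuous with respect to $T$.
   Context: For a convex $\Theta$, $\partial\Theta(x)=\{\xi:\Theta(\bar x)-\Theta(x)-\langle\xi,\bar x-x\rangle\ge0\ \forall\bar x\}$, $\mathcal{D}(\Theta)=\{x:\Theta(x)<\infty\}$, $\mathcal{D}(\partial\Theta)=\{x\in\mathcal{D}(\Theta):\partial\Theta(x)\neq\emptyset\}$, and the Bregman distance is $D_\xi\Theta(\bar x,x)=\Theta(\bar x)-\Theta(x)-\langle\xi,\bar x-x\rangle$ for $\xi\in\partial\Theta(x)$. $\Theta^*(\xi)=\sup_x\{\langle\xi,x\rangle-\Theta(x)\}$ is the Legendre–Fenchel conjugate, $\nabla\Theta^*$ its gradient, $L(x)^*$ the adjoint of $L(x)$, and $B_{2\rho}(x_0)$ the closed ball of radius $2\rho$ about $x_0$. *)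

From HB Require Import structures.
From mathcomp Require Import all_boot all_order all_algebra.
From mathcomp Require Import all_classical all_reals all_analysis.
Set Implicit Arguments. Unset Strict Implicit. Unset Printing Implicit Defensive.
Import Order.TTheory GRing.Theory Num.Theory.
Import numFieldNormedType.Exports.
Local Open Scope classical_set_scope.
Local Open Scope ring_scope.

Section Defs.
Context {R : realType}.

(** [ip] is an inner product on the real normed space [X] inducing its norm.
    A real Hilbert space is then a [completeNormedModType R] with such an [ip]. *)
Definition is_inner_product (X : normedModType R) (ip : X -> X -> R) : Prop :=
  [/\ (forall x y, ip x y = ip y x),
      (forall (a : R) x y z, ip (a *: x + y) z = a * ip x z + ip y z) &
      (forall x, ip x x = `|x| ^+ 2)].

Definition cball (X : normedModType R) (x : X) (r : R) : set X :=
  [set z | `|z - x| <= r].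

Definition weak_cvg (X : normedModType R) (ip : X -> X -> R)
    (u : nat -> X) (x : X) : Prop :=
  forall z, (fun n => ip (u n) z) @ \oo --> ip x z.

Definition edom (X : normedModType R) (Th : X -> \bar R) : set X :=
  [set x | (Th x < +oo)%E].

Definition subdiff (X : normedModType R) (ip : X -> X -> R)
    (Th : X -> \bar R) (x xi : X) : Prop :=
  (Th x < +oo)%E /\
  forall xb, (Th x + (ip xi (xb - x))%:E <= Th xb)%E.

Definition subdiff_dom (X : normedModType R) (ip : X -> X -> R)
    (Th : X -> \bar R) : set X :=
  [set x | x \in edom Th /\ exists xi, subdiff ip Th x xi].

Definition bregman (X : normedModType R) (ip : X -> X -> R)
    (Th : X -> \bar R) (xi xb x : X) : \bar R :=
  (Th xb - Th x - (ip xi (xb - x))%:E)%E.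

Definition conjugate (X : normedModType R) (ip : X -> X -> R)
    (Th : X -> \bar R) (xi : X) : \bar R :=
  ereal_sup [set ((ip xi x)%:E - Th x)%E | x in setT].

Definition is_gradient (X : normedModType R) (ip : X -> X -> R)
    (f : X -> \bar R) (xi g : X) : Prop :=
  f xi \is a fin_num /\
  forall eps : R, 0 < eps -> exists2 del : R, 0 < del &
    forall h : X, `|h| < del ->
      exists r : R, f (xi + h) = r%:E /\
        `|r - fine (f xi) - ip g h| <= eps * `|h|.

Definition weakly_lsc (X : normedModType R) (ip : X -> X -> R)
    (Th : X -> \bar R) : Prop :=
  forall (u : nat -> X) x, weak_cvg ip u x ->
    (Th x <= limn_einf (fun n => Th (u n)))%E.

Definition weakly_closed (X Y : normedModType R) (ipX : X -> X -> R)
    (ipY : Y -> Y -> R) (F : X -> Y) (D : set X) : Prop :=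
  forall (u : nat -> X) x y, (forall n, D (u n)) ->
    weak_cvg ipX u x -> weak_cvg ipY (fun n => F (u n)) y ->
    D x /\ F x = y.

Definition linear_op (X Y : normedModType R) (A : X -> Y) : Prop :=
  forall (a : R) u v, A (a *: u + v) = a *: A u + A v.

End Defs.

(** Only the relation [x = grad Th^* (xi)] matters. The curve [xi] is
    differentiable, hence continuous, at every [T > 0]. The conjugate [Th^*]
    is convex, being a supremum of affine functions, and a Frechet gradient
    of a convex function is the slope of a global affine minorant; comparing
    these minorants with the first-order expansion shows that gradients of a
    convex function depend continuously on the point where they exist. Hence
    [x] is continuous at [T]; it stays in [B_2rho(x0)], inside [D(F)] where
    [F] is continuous, so [F (x t)] and the residual are continuous too. *)

From HB Require Import structures.
From mathcomp Require Import all_boot all_order all_algebra.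
From mathcomp Require Import all_classical all_reals all_analysis.
From mathcomp Require Import ring lra.
Import Order.TTheory GRing.Theory Num.Theory.
Import numFieldNormedType.Exports.
Local Open Scope classical_set_scope.
Local Open Scope ring_scope.

Section InnerProduct.
Context {R : realType} {X : normedModType R} {ip : X -> X -> R}.
Hypothesis ip_inner : is_inner_product ip.

Lemma ipC u v : ip u v = ip v u.
Proof. by case: ip_inner. Qed.

Lemma ipZD a u v z : ip (a *: u + v) z = a * ip u z + ip v z.
Proof. by case: ip_inner. Qed.

Lemma ipxx u : ip u u = `|u| ^+ 2.
Proof. by case: ip_inner. Qed.

Lemma ip0l z : ip 0 z = 0.
Proof.
apply: (addrI (ip 0 z)); rewrite addr0.
by have := ipZD 1 0 0 z; rewrite scale1r addr0 mul1r.
Qed.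

Lemma ipDl u v z : ip (u + v) z = ip u z + ip v z.
Proof. by rewrite -[in LHS](scale1r u) ipZD mul1r. Qed.

Lemma ipZl a u z : ip (a *: u) z = a * ip u z.
Proof. by rewrite -[a *: u]addr0 ipZD ip0l addr0. Qed.

Lemma ipBl u v z : ip (u - v) z = ip u z - ip v z.
Proof. by rewrite ipDl -scaleN1r ipZl mulN1r. Qed.

Lemma ipDr u v z : ip z (u + v) = ip z u + ip z v.
Proof. by rewrite ipC ipDl !(ipC z). Qed.

Lemma ipZr a u z : ip z (a *: u) = a * ip z u.
Proof. by rewrite ipC ipZl (ipC z). Qed.

End InnerProduct.

Definition fin_convex {R : realType} {X : normedModType R}
    (f : X -> \bar R) : Prop :=
  forall a e (A r t : R), 0 <= t <= 1 -> f a = A%:E -> f e = r%:E ->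
    (f (a + t *: (e - a))%R <= ((1 - t) * A + t * r)%:E)%E.

Section ConvexGradient.
Context {R : realType} {X : normedModType R} {ip : X -> X -> R}.
Hypothesis ip_inner : is_inner_product ip.

Lemma conjugate_fin_convex (Th : X -> \bar R) : fin_convex (conjugate ip Th).
Proof.
move=> a e A r t /andP[t_ge0 t_le1] conj_a conj_e.
apply: ge_ereal_sup => _ [z _ <-].
have le_a : ((ip a z)%:E - Th z <= A%:E)%E.
  by rewrite -conj_a; apply: ereal_sup_ubound; exists z.
have le_e : ((ip e z)%:E - Th z <= r%:E)%E.
  by rewrite -conj_e; apply: ereal_sup_ubound; exists z.
move: le_a le_e; case: (Th z) => [c| |] //=;
  last by move=> _ _; rewrite addeNy leNye.
rewrite -!EFinD !lee_fin (ipDl ip_inner) (ipZl ip_inner) (ipBl ip_inner).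
have : 0 <= 1 - t by rewrite subr_ge0.
nra.
Qed.

Context {f : X -> \bar R} (f_convex : fin_convex f).

Lemma gradient_minorant {a g e : X} {A r : R} : is_gradient ip f a g ->
  f a = A%:E -> f e = r%:E -> A + ip g (e - a) <= r.
Proof.
move=> [_ f_expand] f_a f_e; set v := e - a; set N := `|v|.
have N_ge0 : 0 <= N by exact: normr_ge0.
suff near_minorant : forall eps, 0 < eps -> ip g v <= r - A + eps * N.
  suff : ip g v <= r - A by lra.
  apply/ler_addgt0Pr => eps eps_gt0.
  have N1_gt0 : 0 < N + 1 by lra.
  apply: le_trans (near_minorant _ (divr_gt0 eps_gt0 N1_gt0)) _.
  by rewrite lerD2l mulrAC ler_pdivrMr //; nra.
move=> eps eps_gt0; have [del del_gt0 expand_del] := f_expand eps eps_gt0.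
(* Step from [a] towards [e] by [t] small enough that [t * N < del]. *)
set D := 2 * (N + 1) + del; have D_gt0 : 0 < D by rewrite /D; lra.
set t := del / D; have tD : t * D = del by rewrite /t mulfVK // gt_eqF.
have t_gt0 : 0 < t by rewrite /t divr_gt0.
have t_le1 : t <= 1 by rewrite /t ler_pdivrMr // mul1r /D; lra.
have tv_small : `|t *: v| < del.
  rewrite normrZ gtr0_norm // -/N -tD ltr_pM2l // /D; lra.
have [q [f_step q_expand]] := expand_del _ tv_small.
have t01 : 0 <= t <= 1 by rewrite ltW.
have := f_convex _ _ _ _ _ t01 f_a f_e; rewrite -/v f_step lee_fin => q_convex.
move: q_expand; rewrite f_a /= normrZ gtr0_norm // -/N (ipZr ip_inner).
rewrite ler_norml => /andP[q_lower _].
have : t * ip g v <= t * (r - A + eps * N) by nra.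
by rewrite ler_pM2l.
Qed.

(* Expand [f] at [a] in the direction [h = k + (b - a)], with [k] of length
   [del / 2] along [grad f b - grad f a], and compare with the minorants at
   [a] and at [b]. *)
Lemma gradient_continuous {a g : X} : is_gradient ip f a g ->
  forall eps, 0 < eps -> exists2 d, 0 < d &
    forall b gb, `|b - a| < d -> is_gradient ip f b gb -> `|gb - g| <= eps.
Proof.
move=> a_grad eps eps_gt0; have [fa_fin f_expand] := a_grad.
have eps4_gt0 : 0 < eps / 4 by rewrite divr_gt0.
have [del del_gt0 expand_del] := f_expand _ eps4_gt0.
exists (del / 4) => [|b gb ba_small b_grad]; first by rewrite divr_gt0.
have [fb_fin _] := b_grad.
set A := fine (f a); have f_a : f a = A%:E by rewrite fineK.
set B := fine (f b); have f_b : f b = B%:E by rewrite fineK.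
set u := gb - g; have [->|u_neq0] := eqVneq u 0; first by rewrite normr0 ltW.
have u_gt0 : 0 < `|u| by rewrite normr_gt0.
set r := del / 2; set k := (r / `|u|) *: u; set h := k + (b - a).
have k_norm : `|k| = r.
  by rewrite /k normrZ gtr0_norm ?divr_gt0 // divfK // gt_eqF.
have h_small : `|h| < del.
  by apply: le_lt_trans (ler_normD _ _) _; rewrite k_norm /r; lra.
have [q [f_ah q_expand]] := expand_del _ h_small.
have min_b := gradient_minorant b_grad f_b f_ah.
have min_a := gradient_minorant a_grad f_a f_b.
have ahb : a + h - b = k by rewrite /h addrCA subrKC addrK.
rewrite ahb in min_b.
move: q_expand; rewrite -/A /h (ipDr ip_inner) ler_norml => /andP[_ q_upper].
have uk : ip gb k - ip g k = r * `|u|.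
  rewrite -(ipBl ip_inner) -/u /k (ipZr ip_inner) (ipxx ip_inner).
  by field; rewrite gt_eqF.
have : eps / 4 * `|h| <= eps / 4 * del by rewrite ler_pM2l // ltW.
have : del * `|u| <= del * (eps / 2) by rewrite /r in uk; nra.
by rewrite ler_pM2l //; lra.
Qed.

Lemma gradient_comp_continuous {S : topologicalType} {xi x : S -> X} {s : S} :
  {for s, continuous xi} ->
  (\forall s' \near s, is_gradient ip f (xi s') (x s')) ->
  {for s, continuous x}.
Proof.
move=> xi_cont x_grad; apply/cvgrPdist_le => eps eps_gt0.
have [d d_gt0 close_grad] :=
  gradient_continuous (nbhs_singleton x_grad) _ eps_gt0.
have xi_close : \forall s' \near s, `|xi s' - xi s| < d.
  move/cvgrPdist_lt : xi_cont => /(_ d d_gt0).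
  by apply: filterS => s'; rewrite distrC.
by near=> s'; rewrite distrC; apply: (close_grad (xi s')); near: s'.
Unshelve. all: by end_near.
Qed.

End ConvexGradient.

Lemma continuous_within_comp_at {S U V : topologicalType} {D : set U}
    {F : U -> V} {x : S -> U} {s : S} :
  {within D, continuous F} -> {for s, continuous x} ->
  (\forall s' \near s, D (x s')) -> {for s, continuous (F \o x)}.
Proof.
move=> F_cont x_cont x_D.
have F_within := (subspace_continuousP _ _).1 F_cont _ (nbhs_singleton x_D).
apply: cvg_trans F_within => P /= P_near.
have DP_near : \forall u \near x s, D u -> P (F u) by exact: P_near.
have := x_cont _ DP_near.
by apply: filterS2 x_D => s' Ds' /(_ Ds').
Qed.

Theorem lemma3p1 (R : realType)
  (X Y : completeNormedModType R) (ipX : X -> X -> R) (ipY : Y -> Y -> R)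
  (F : X -> Y) (DF : set X) (y ydel : Y) (delta : R)
  (Th : X -> \bar R) (p c0 : R) (rho : R) (x0 xi0 xstar : X)
  (L : X -> X -> Y) (Ladj : X -> Y -> X) (eta C0 : R)
  (xi x : R -> X) :
  is_inner_product ipX -> is_inner_product ipY ->
  `|y - ydel| <= delta ->
  (* (a) *)
  (forall z, Th z != -oo%E) -> (exists z, (Th z < +oo)%E) ->
  weakly_lsc ipX Th ->
  1 < p -> 0 < c0 ->
  (forall xb z xiz, xb \in edom Th -> z \in subdiff_dom ipX Th ->
     subdiff ipX Th z xiz ->
     ((c0 * `|z - xb| `^ p)%:E <= bregman ipX Th xiz xb z)%E) ->
  (* (b) *)
  0 < rho -> subdiff ipX Th x0 xi0 -> cball x0 (2 * rho) `<=` DF ->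
  xstar \in edom Th -> DF xstar -> F xstar = y ->
  (bregman ipX Th xi0 xstar x0 <= (c0 * rho `^ p)%:E)%E ->
  (* (c) *)
  {within DF, continuous F} -> weakly_closed ipX ipY F DF ->
  (* (d) *)
  (forall z, z \in cball x0 (2 * rho) `&` edom Th -> linear_op (L z)) ->
  (forall z, z \in cball x0 (2 * rho) `&` edom Th ->
     forall h w, ipY (L z h) w = ipX h (Ladj z w)) ->
  (forall z, z \in cball x0 (2 * rho) `&` edom Th ->
     forall eps : R, 0 < eps -> exists2 del : R, 0 < del &
       forall z', z' \in cball x0 (2 * rho) `&` edom Th -> `|z' - z| < del ->
         forall h, `|L z' h - L z h| <= eps * `|h|) ->
  0 <= eta < 1 ->
  (forall z zb, z \in cball x0 (2 * rho) `&` edom Th ->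
     zb \in cball x0 (2 * rho) `&` edom Th ->
     `|F z - F zb - L zb (z - zb)| <= eta * `|F z - F zb|) ->
  0 < C0 ->
  (forall z, z \in cball x0 (2 * rho) `&` edom Th ->
     forall h, `|L z h| <= C0 * `|h|) ->
  (* (xi, x) solves the initial value problem on [0, +oo) *)
  xi 0 = xi0 -> x 0 = x0 ->
  (forall t : R, 0 <= t -> x t \in cball x0 (2 * rho) `&` edom Th) ->
  (forall t : R, 0 <= t -> is_gradient ipX (conjugate ipX Th) (xi t) (x t)) ->
  {within `[0, +oo[, continuous xi} ->
  (forall t : R, 0 < t -> is_derive t 1 xi (- Ladj (x t) (F (x t) - ydel))) ->
  (* conclusion *)
  forall T : R, 0 < T ->
    {for T, continuous x} /\
    {for T, continuous (fun t => `|F (x t) - ydel|)}.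
Proof.
move=> ipX_inner _ _ _ _ _ _ _ _ _ _ ball_DF _ _ _ _ F_cont _ _ _ _ _ _ _ _
  _ _ x_ball x_grad _ xi_deriv T T_gt0.
have T_pos : \forall t \near T, 0 < t := lt_nbhsr T_gt0.
have xi_cont : {for T, continuous xi}.
  have [xi_derivable _] := xi_deriv T T_gt0.
  exact/differentiable_continuous/derivable1_diffP.
have x_cont : {for T, continuous x}.
  have conj_convex := conjugate_fin_convex ipX_inner Th.
  apply: (gradient_comp_continuous ipX_inner conj_convex xi_cont).
  by apply: filterS T_pos => t /ltW /x_grad.
have x_DF : \forall t \near T, DF (x t).
  by apply: filterS T_pos => t /ltW /x_ball; rewrite inE => -[/ball_DF].
have Fx_cont := continuous_within_comp_at F_cont x_cont x_DF.
split=> //; apply: cvg_norm; apply: cvgB => //; exact: cvg_cst.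
Qed.
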